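(* Let $\{\mu_n\}$ and $\mu$ be Borel probability measures on $\mathbb R^s$ with compact supports, and suppose $\mu_n\to\mu$ weakly. Then $\mathcal Z(\mu)=\emptyset$ if and only if there exist $\varepsilon>0$ and $N>0$ such that $\mathcal Z(\mu_n)=\emptyset$ for all $n\ge N$ and $$\sup_{n\ge N,\ \xi\in[0,1)^s}\ \min\{|k|:k\in\mathbb Z^s,\ |\widehat{\mu_n}(\xi+k)|\ge\varepsilon\}<\infty$$ (in particular, the set over which the minimum is taken is nonempty for every $n\ge N$ and $\xi\in[0,1)^s$).
   Context: $\widehat\mu(\xi)=\int e^{2\pi i\langle x,\xi\rangle}d\mu(x)$, and $\mathcal Z(\mu)=\{\xi\in[0,1)^s:\widehat\mu(\xi+k)=0\text{ for all }k\in\mathbb Z^s\}$. Weak convergence means $\int f\,d\mu_n\to\int f\,d\mu$ for all continuous compactly supported $f$. *)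

From HB Require Import structures.
From mathcomp Require Import all_boot all_order all_algebra.
From mathcomp Require Import all_classical all_reals all_analysis.
From mathcomp Require Import complex.
Set Implicit Arguments. Unset Strict Implicit. Unset Printing Implicit Defensive.
Import Order.TTheory GRing.Theory Num.Theory.
Import numFieldNormedType.Exports.
Local Open Scope classical_set_scope.
Local Open Scope ring_scope.

(* R^s is modelled as row vectors 'rV[R]_s (with their product/sup-norm
   topology); the Borel sigma-algebra is the one generated by open sets. *)
Definition Rs (R : realType) (s : nat) :=
  g_sigma_algebraType (@open 'rV[R]_s).

Definition dotv (R : realType) (s : nat) (x y : 'rV[R]_s) : R :=
  \sum_(i < s) x ord0 i * y ord0 i.

(* Fourier transform  hat mu (xi) = \int e^{2 pi i <x,xi>} d mu(x),
   as a complex number (R[i]) with real part \int cos and imaginary part \int sin. *)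
Definition fourier (R : realType) (s : nat) (mu : probability (Rs R s) R)
  (xi : 'rV[R]_s) : R[i] :=
  ((Rintegral mu setT (fun x : Rs R s => cos (2 * pi * dotv x xi))) +i*
   (Rintegral mu setT (fun x : Rs R s => sin (2 * pi * dotv x xi))))%C.

Definition unit_cube (R : realType) (s : nat) : set 'rV[R]_s :=
  [set xi | forall i : 'I_s, 0 <= xi ord0 i < 1].

Definition intvec (R : realType) (s : nat) (k : 'rV[int]_s) : 'rV[R]_s :=
  map_mx (fun z : int => z%:~R) k.

Definition Zset (R : realType) (s : nat) (mu : probability (Rs R s) R)
  : set 'rV[R]_s :=
  [set xi | @unit_cube R s xi /\
            forall k : 'rV[int]_s, fourier mu (xi + @intvec R s k) = 0].

Definition compact_support (R : realType) (s : nat) (mu : probability (Rs R s) R)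
  : Prop :=
  exists K : set 'rV[R]_s, compact K /\ mu (~` K) = 0%E.

Definition Cc (R : realType) (s : nat) (f : 'rV[R]_s -> R) : Prop :=
  continuous f /\ exists K : set 'rV[R]_s, compact K /\ forall x, ~ K x -> f x = 0.

Definition weak_cvg (R : realType) (s : nat)
  (mun : nat -> probability (Rs R s) R) (mu : probability (Rs R s) R) : Prop :=
  forall f : 'rV[R]_s -> R, Cc f ->
    (fun n => Rintegral (mun n) setT (f : Rs R s -> R)) @ \oo
      --> Rintegral mu setT (f : Rs R s -> R).

From HB Require Import structures.
From mathcomp Require Import all_boot all_order all_algebra.
From mathcomp Require Import all_classical all_reals all_analysis.
From mathcomp Require Import complex.
From mathcomp Require Import ring lra.
Set Implicit Arguments. Unset Strict Implicit. Unset Printing Implicit Defensive.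
Import Order.TTheory GRing.Theory Num.Theory.
Import numFieldNormedType.Exports.
Local Open Scope classical_set_scope.
Local Open Scope ring_scope.

(* Re and Im of hat mu_n integrate the bounded waves cos/sin (2 pi <x, xi>).
   Multiplied by a continuous cutoff equal to 1 on the support of mu they
   become admissible test functions, and the mass of mu_n outside the cutoff
   tends to 0; so hat mu_n -> hat mu pointwise, and uniformly on compact sets
   because the waves are Lipschitz in xi on the cutoff region (this also makes
   hat mu Lipschitz).  If Z(mu) is empty, each point of the closed cube has an
   integer shift k and a ball on which |hat mu (. + k)| stays above a positive
   constant; a finite subcover yields a uniform eps and a uniform bound on |k|,
   which pass to hat mu_n.  Conversely such bounds for hat mu_n pass to the
   limit and forbid zeros of hat mu. *)

Section Integrals.
Variables (R : realType) (s : nat).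

Lemma continuous_measurable_fun (f : 'rV[R]_s -> R) : continuous f ->
  measurable_fun [set: Rs R s] (f : Rs R s -> R).
Proof.
move=> /continuousP cf.
apply: (measurability _ (measurable_realfun.RGenOpens.measurableE R)).
move=> _ [_ [a [b ->] <-]]; rewrite setTI.
by apply: sub_sigma_algebra; apply: cf; exact: interval_open.
Qed.

Variable mu : probability (Rs R s) R.

Lemma bounded_integrable (f : Rs R s -> R) : measurable_fun setT f ->
  (exists M, forall x, `|f x| <= M) -> mu.-integrable setT (EFin \o f).
Proof.
move=> mf [M fM]; apply: measurable_bounded_integrable => //.
  by apply: (@le_lt_trans _ _ 1%E); [exact: probability_le1|exact: ltry].
exists M; split; first by rewrite num_real.
by move=> y My x _; apply: le_trans (fM x) _; exact: ltW.
Qed.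

Lemma bounded_continuous_integrable (f : 'rV[R]_s -> R) : continuous f ->
  (exists M, forall x, `|f x| <= M) -> mu.-integrable setT (EFin \o (f : Rs R s -> R)).
Proof. by move=> cf; apply: bounded_integrable; exact: continuous_measurable_fun. Qed.

Lemma Rintegral_cst_probability (c : R) : Rintegral mu setT (fun=> c) = c.
Proof. by rewrite Rintegral_cst// (f_equal fine (probability_setT mu)) mulr1. Qed.

Lemma normr_RintegralB_le (f g h : 'rV[R]_s -> R) :
  continuous f -> continuous g -> continuous h ->
  (exists M, forall x, `|f x| <= M) -> (exists M, forall x, `|g x| <= M) ->
  (exists M, forall x, `|h x| <= M) -> (forall x, `|f x - g x| <= h x) ->
  `|Rintegral mu setT (f : Rs R s -> R) - Rintegral mu setT (g : Rs R s -> R)|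
    <= Rintegral mu setT (h : Rs R s -> R).
Proof.
move=> cf cg ch [Mf bf] [Mg bg] bh fgh.
have ifB : mu.-integrable setT (EFin \o ((fun x => f x - g x) : Rs R s -> R)).
  apply: bounded_continuous_integrable; first by move=> x; apply: continuousB; [exact: cf|exact: cg].
  by exists (Mf + Mg) => x; apply: le_trans (ler_normB _ _) _; exact: lerD.
rewrite -RintegralB //; try by apply: bounded_continuous_integrable => //; eexists.
apply: le_trans (le_normr_Rintegral _ ifB) _ => //.
apply: le_Rintegral => //; first exact: integrable_norm.
exact: bounded_continuous_integrable.
Qed.

End Integrals.

Section Cutoff.
Variables (R : realType) (s : nat).
Implicit Types (r : R) (x : 'rV[R]_s).

Definition cutoff r x : R := Num.min 1 (Num.max 0 (r + 1 - `|x|)).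

Lemma cutoff_ge0 r x : 0 <= cutoff r x.
Proof. by rewrite /cutoff le_min ler01 le_max lexx. Qed.

Lemma cutoff_le1 r x : cutoff r x <= 1.
Proof. by rewrite /cutoff ge_min lexx. Qed.

Lemma cutoff_Bge0 r x : 0 <= 1 - cutoff r x.
Proof. by rewrite subr_ge0 cutoff_le1. Qed.

Lemma cutoff_Ble1 r x : 1 - cutoff r x <= 1.
Proof. by rewrite lerBlDr lerDl cutoff_ge0. Qed.

Lemma cutoff1 r x : `|x| <= r -> cutoff r x = 1.
Proof.
move=> xr; rewrite /cutoff; apply/min_idPl; rewrite le_max; apply/orP; right.
by rewrite lerBrDr addrC lerD2r.
Qed.

Lemma cutoff_neq0 r x : cutoff r x != 0 -> `|x| < r + 1.
Proof.
apply: contraNT; rewrite -leNgt => h; apply/eqP; rewrite /cutoff.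
have -> : Num.max 0 (r + 1 - `|x|) = 0 by apply/max_idPl; rewrite subr_le0.
by apply/min_idPr; exact: ler01.
Qed.

Lemma continuous_cutoff r : continuous (cutoff r).
Proof.
move=> x; apply: (@continuous_min _ _ (fun=> 1) (fun x => Num.max 0 (r + 1 - `|x|))).
  exact: cst_continuous.
apply: (@continuous_max _ _ (fun=> 0) (fun x => r + 1 - `|x|)).
  exact: cst_continuous.
by apply: continuousB; [exact: cst_continuous|exact: norm_continuous].
Qed.

Lemma continuous_1Bcutoff r : continuous (fun x => 1 - cutoff r x).
Proof.
by move=> x; apply: continuousB; [exact: cst_continuous|exact: continuous_cutoff].
Qed.

Lemma compact_norm_le r : 0 < r -> compact [set x : 'rV[R]_s | `|x| <= r].
Proof.
move=> r0; apply: bounded_closed_compact.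
  exists r; split; first by rewrite num_real.
  by move=> M rM x /= xr; apply: le_trans xr (ltW rM).
have -> : [set x : 'rV[R]_s | `|x| <= r] = closed_ball 0 r.
  by rewrite closed_ballE//; apply/seteqP; split => x /=;
    rewrite /closed_ball_ /= distrC subr0.
exact: closed_ball_closed.
Qed.

Lemma Cc_mul_cutoff (g : 'rV[R]_s -> R) r : 0 < r -> continuous g ->
  Cc (fun x => g x * cutoff r x).
Proof.
move=> r0 cg; split.
  by move=> x; apply: continuousM; [exact: cg|exact: continuous_cutoff].
exists [set x | `|x| <= r + 1]; split; first by apply: compact_norm_le; exact: addr_gt0.
move=> x xK; have /eqP -> : cutoff r x == 0; last by rewrite mulr0.
by apply: contraT => /cutoff_neq0 /ltW.
Qed.

Lemma Cc_cutoff r : 0 < r -> Cc (cutoff r).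
Proof.
move=> r0; have := Cc_mul_cutoff r0 (@cst_continuous _ _ (1 : R)).
by congr Cc; apply/funext => x; rewrite mul1r.
Qed.

Variable mu : probability (Rs R s) R.

Definition cutoff_tail r := Rintegral mu setT (fun x => 1 - cutoff r x).

Lemma integrable_cutoff r : mu.-integrable setT (EFin \o (cutoff r : Rs R s -> R)).
Proof.
apply: bounded_continuous_integrable; first exact: continuous_cutoff.
by exists 1 => x; rewrite ger0_norm ?cutoff_ge0 ?cutoff_le1.
Qed.

Lemma integrable_1Bcutoff r :
  mu.-integrable setT (EFin \o ((fun x => 1 - cutoff r x) : Rs R s -> R)).
Proof.
apply: bounded_continuous_integrable; first exact: continuous_1Bcutoff.
by exists 1 => x; rewrite ger0_norm ?cutoff_Bge0 ?cutoff_Ble1.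
Qed.

Lemma cutoff_tailE r : cutoff_tail r = 1 - Rintegral mu setT (cutoff r).
Proof.
rewrite /cutoff_tail RintegralB ?Rintegral_cst_probability//;
  last exact: integrable_cutoff.
by apply: bounded_integrable => //; exists 1 => _; rewrite normr1.
Qed.

Lemma cutoff_tail_eq0 : compact_support mu -> exists2 r : R, 0 < r & cutoff_tail r = 0.
Proof.
case=> K [cK muK]; have [M [_ HM]] := compact_bounded cK.
pose r := `|M| + 1; have r0 : 0 < r by rewrite ltr_pwDr.
have Kr x : K x -> `|x| <= r.
  by move=> Kx; apply: (HM r) => //; rewrite (le_lt_trans (ler_norm M)) // ltrDl.
have mK : measurable (~` K : set (Rs R s)).
  apply: sub_sigma_algebra; apply: closed_openC.
  exact: (compact_closed (@norm_hausdorff _ _) cK).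
exists r => //; apply/eqP; rewrite eq_le; apply/andP; split; last first.
  by apply: Rintegral_ge0 => x _; exact: cutoff_Bge0.
apply: le_trans (@le_Rintegral _ _ _ mu setT _ (\1_(~` K) : Rs R s -> R) _ _ _ _) _ => //.
- exact: integrable_1Bcutoff.
- apply: bounded_integrable; first exact: measurable_realfun.measurable_indic.
  by exists 1 => x; rewrite indicE; case: (_ \in _); rewrite ?normr1 ?normr0.
- move=> x _; rewrite indicE; case: (pselect (K x)) => Kx.
    by rewrite cutoff1 ?Kr // subrr.
  by rewrite (_ : x \in ~` K) ?inE // cutoff_Ble1.
rewrite /Rintegral integral_indic// setIT.
by rewrite (_ : fine _ = 0) //; exact: (f_equal fine muK).
Qed.

End Cutoff.

Section PlaneWaves.
Variables (R : realType) (s : nat).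
Implicit Types (x y : 'rV[R]_s).

Lemma continuous_dotv y : continuous (fun x : 'rV[R]_s => dotv x y).
Proof.
apply: (@continuous_big R _ +%R 0 xpredT).
  exact: pseudometric_normed_Zmodule.add_continuous.
by move=> i _ x; apply: continuousM; [exact: coord_continuous|exact: cst_continuous].
Qed.

Lemma normr_coord_le x i : `|x ord0 i| <= `|x|.
Proof.
rewrite [leRHS]/Num.Def.normr /= mx_normrE; apply/bigmax_geP; right => /=.
by exists (ord0, i).
Qed.

Lemma normr_dotv_le x y : `|dotv x y| <= s%:R * `|x| * `|y|.
Proof.
apply: le_trans (ler_norm_sum _ _ _) _.
apply: le_trans (_ : \sum_(i < s) `|x| * `|y| <= _).
  by apply: ler_sum => i _; rewrite normrM; apply: ler_pM; rewrite ?normr_coord_le.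
by rewrite sumr_const card_ord -mulrA mulr_natl.
Qed.

Lemma dotvBr x a b : dotv x a - dotv x b = dotv x (a - b).
Proof. by rewrite /dotv -sumrB; apply: eq_bigr => i _; rewrite !mxE mulrBr. Qed.

Lemma dist_le_of_is_derive (f df : R -> R) :
  (forall z, is_derive z (1 : R) f (df z)) -> (forall z, `|df z| <= 1) ->
  forall u v, `|f u - f v| <= `|u - v|.
Proof.
move=> fd dfb.
have cf : continuous f.
  by move=> z; apply/differentiable_continuous/derivable1_diffP; exact: ex_derive.
suff H u v : u <= v -> `|f u - f v| <= `|u - v|.
  move=> u v; case: (leP u v) => uv; first exact: H.
  by rewrite distrC [X in _ <= X]distrC; apply: H; exact: ltW.
move=> uv; rewrite distrC [X in _ <= X]distrC.
have [c _ ->] := MVT_segment uv (fun z _ => fd z) (continuous_subspaceT cf).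
by rewrite normrM ler_piMl.
Qed.

Definition trig_kernel (t : R -> R) :=
  [/\ continuous t, forall u, `|t u| <= 1 & forall u v, `|t u - t v| <= `|u - v|].

Lemma trig_kernel_cos : trig_kernel cos.
Proof.
split; [exact: continuous_cos|exact: cos_max|].
by apply: (dist_le_of_is_derive (fun z => is_derive_cos z)) => z; rewrite normrN sin_max.
Qed.

Lemma trig_kernel_sin : trig_kernel sin.
Proof.
split; [exact: continuous_sin|exact: sin_max|].
by apply: (dist_le_of_is_derive (fun z => is_derive_sin z)) => z; rewrite cos_max.
Qed.

Variable t : R -> R.
Hypothesis ht : trig_kernel t.

Definition plane_wave xi x := t (2 * pi * dotv x xi).

Lemma continuous_plane_wave xi : continuous (plane_wave xi).
Proof.
case: ht => ct _ _ x; apply: (continuous_comp (f := fun x => 2 * pi * dotv x xi)).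
  by apply: continuousM; [exact: cst_continuous|exact: continuous_dotv].
exact: ct.
Qed.

Lemma normr_plane_wave_le1 xi x : `|plane_wave xi x| <= 1.
Proof. by case: ht => _ + _; apply. Qed.

Lemma normr_plane_waveB_le2 a b x : `|plane_wave a x - plane_wave b x| <= 2.
Proof.
apply: le_trans (ler_normB _ _) _.
by rewrite -[2]/(1 + 1); apply: lerD; exact: normr_plane_wave_le1.
Qed.

Lemma wave_const_ge0 r : 0 < r -> 0 <= 2 * pi * s%:R * (r + 1) :> R.
Proof. by move=> r0; rewrite !mulr_ge0 // ?pi_ge0 // addr_ge0 // ltW. Qed.

(* On the support of [cutoff r] the wave is Lipschitz in [xi]; off it the
   trivial bound [2] is paid for by the tail term. *)
Lemma normr_plane_waveB_le a b x r : 0 < r ->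
  `|plane_wave a x - plane_wave b x|
    <= 2 * pi * s%:R * (r + 1) * `|a - b| + 2 * (1 - cutoff r x).
Proof.
move=> r0; have c0 := mulr_ge0 (wave_const_ge0 r0) (normr_ge0 (a - b)).
have [/eqP x0|/cutoff_neq0 xr] := boolP (cutoff r x == 0).
  rewrite x0 subr0 mulr1; apply: le_trans (normr_plane_waveB_le2 a b x) _.
  by rewrite lerDr.
apply: le_trans (_ : 2 * pi * s%:R * (r + 1) * `|a - b| <= _); last first.
  by rewrite lerDl mulr_ge0 ?cutoff_Bge0.
case: ht => _ _ tlip; apply: le_trans (tlip _ _) _.
have pi2 : 0 <= 2 * pi :> R by rewrite mulr_ge0 ?pi_ge0.
rewrite -mulrBr dotvBr normrM (ger0_norm pi2) -!mulrA.
apply: ler_wpM2l => //; apply: ler_wpM2l; first exact: pi_ge0.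
apply: le_trans (normr_dotv_le x (a - b)) _.
by rewrite -mulrA; apply: ler_wpM2l => //; apply: ler_wpM2r => //; exact: ltW.
Qed.

Variable mu : probability (Rs R s) R.

Definition Rfourier xi := Rintegral mu setT (plane_wave xi : Rs R s -> R).

Lemma Rfourier_dist_le a b r : 0 < r ->
  `|Rfourier a - Rfourier b|
    <= 2 * pi * s%:R * (r + 1) * `|a - b| + 2 * cutoff_tail mu r.
Proof.
move=> r0; set c := 2 * pi * s%:R * (r + 1) * `|a - b|.
have c0 : 0 <= c by rewrite mulr_ge0 ?wave_const_ge0.
have ctail : continuous (fun x : 'rV[R]_s => 2 * (1 - cutoff r x)).
  move=> x; apply: (@continuousM _ _ (fun=> 2) (fun x => 1 - cutoff r x)).
    exact: cst_continuous.
  exact: continuous_1Bcutoff.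
have btail x : `|2 * (1 - cutoff r x)| <= 2.
  by rewrite ger0_norm ?mulr_ge0 ?cutoff_Bge0 // ler_piMr ?cutoff_Bge0 ?cutoff_Ble1.
rewrite /Rfourier; apply: le_trans (normr_RintegralB_le mu
  (h := fun x => c + 2 * (1 - cutoff r x))
  _ _ _ _ _ _ (fun x => normr_plane_waveB_le a b x r0)) _.
- exact: continuous_plane_wave.
- exact: continuous_plane_wave.
- move=> x; apply: (@continuousD _ _ _ (fun=> c) (fun x => 2 * (1 - cutoff r x))).
    exact: cst_continuous.
  exact: ctail.
- by exists 1; exact: normr_plane_wave_le1.
- by exists 1; exact: normr_plane_wave_le1.
- by exists (`|c| + 2) => x; apply: le_trans (ler_normD _ _) _; rewrite lerD2l.
rewrite RintegralD ?Rintegral_cst_probability ?RintegralZl //.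
- exact: integrable_1Bcutoff.
- by apply: bounded_integrable => //; exists `|c| => _.
- by apply: bounded_continuous_integrable => //; exists 2.
Qed.

Lemma Rfourier_cutoff_dist_le xi r :
  `|Rfourier xi - Rintegral mu setT (fun x => plane_wave xi x * cutoff r x)|
    <= cutoff_tail mu r.
Proof.
have bcut x : `|plane_wave xi x * cutoff r x| <= 1.
  rewrite normrM -[1]mulr1; apply: ler_pM => //; first exact: normr_plane_wave_le1.
  by rewrite ger0_norm ?cutoff_ge0 ?cutoff_le1.
rewrite /Rfourier /cutoff_tail; apply: normr_RintegralB_le.
- exact: continuous_plane_wave.
- move=> x; apply: continuousM; first exact: continuous_plane_wave.
  exact: continuous_cutoff.
- exact: continuous_1Bcutoff.
- by exists 1; exact: normr_plane_wave_le1.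
- by exists 1.
- by exists 1 => x; rewrite ger0_norm ?cutoff_Bge0 ?cutoff_Ble1.
move=> x; rewrite -{1}[plane_wave xi x]mulr1 -mulrBr normrM.
rewrite (ger0_norm (cutoff_Bge0 _ _)).
by rewrite ler_piMl ?cutoff_Bge0 ?normr_plane_wave_le1.
Qed.

End PlaneWaves.

Section EquiLipschitz.
Variables (R : realType) (V : normedModType R).

Lemma equilipschitz_cvg_unif (g : nat -> V -> R) (h : V -> R) (e : nat -> R)
    (L : R) (C : set V) : compact C -> 0 <= L ->
  (forall q, g ^~ q @ \oo --> h q) ->
  (forall n a b, `|g n a - g n b| <= L * `|a - b| + e n) ->
  (forall a b, `|h a - h b| <= L * `|a - b|) ->
  e @ \oo --> 0 ->
  forall d, 0 < d -> \forall n \near \oo, forall q, C q -> `|g n q - h q| <= d.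
Proof.
move=> cC L0 gh glip hlip e0 d d0.
pose d' := d / 4; have d'0 : 0 < d' by rewrite divr_gt0.
pose eta := d' / (L + 1); have eta0 : 0 < eta by rewrite divr_gt0 // ltr_wpDl.
have Leta (a b : V) : `|a - b| < eta -> L * `|a - b| <= d'.
  move=> ab; apply: le_trans (_ : L * eta <= d').
    by apply: ler_wpM2l => //; exact: ltW.
  by rewrite /eta mulrA ler_pdivrMr ?ltr_wpDl // mulrC ler_pM2l // lerDl.
pose D := [set pN : V * nat | forall n, (pN.2 <= n)%N -> `|g n pN.1 - h pN.1| <= d'].
have cov : C `<=` cover D (fun pN => ball pN.1 eta).
  move=> q _; move/cvgr_distC_le: (gh q) => /(_ _ d'0) [N _ HN].
  by exists (q, N); [exact: HN|exact: ballxx].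
move: cC; rewrite compact_cover => /(_ _ D _ (fun i _ => ball_open _ _) cov).
case=> D' D'D CD'.
pose N0 := \max_(pN <- finmap.enum_fset D') pN.2.
have nearN0 : \forall n \near \oo, (N0 <= n)%N by exists N0.
have nearE : \forall n \near \oo, `|e n| <= d' by exact: cvgr0_norm_le.
apply: filterS2 nearN0 nearE => n nN0 en q Cq.
have [[p m] /= pD' qp] := CD' q Cq.
have Dp : D (p, m) by have := D'D _ pD'; rewrite inE.
have mn : (m <= n)%N := leq_trans (@leq_bigmax_seq _ _ xpredT snd _ pD' isT) nN0.
have pq : `|p - q| < eta by move: qp; rewrite -ball_normE.
have gqp : `|g n q - g n p| <= d' + d'.
  apply: le_trans (glip n q p) _; apply: lerD; last exact: le_trans (ler_norm _) en.
  by apply: Leta; rewrite distrC.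
have gph : `|g n p - h p| <= d' := Dp n mn.
have hpq : `|h p - h q| <= d' := le_trans (hlip p q) (Leta p q pq).
have -> : g n q - h q = (g n q - g n p) + (g n p - h p) + (h p - h q).
  by rewrite !addrA !subrK.
have -> : d = d' + d' + d' + d' by rewrite /d'; field.
apply: le_trans (ler_normD _ _) _; apply: lerD hpq.
by apply: le_trans (ler_normD _ _) _; exact: lerD gqp gph.
Qed.

End EquiLipschitz.

Section WeakConvergence.
Variables (R : realType) (s : nat).
Variables (mun : nat -> probability (Rs R s) R) (mu : probability (Rs R s) R).
Hypothesis hmu : compact_support mu.
Hypothesis hw : weak_cvg mun mu.

Lemma cutoff_tail_cvg r : 0 < r ->
  (fun n => cutoff_tail (mun n) r) @ \oo --> cutoff_tail mu r.
Proof.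
move=> r0; rewrite (funext (fun n => cutoff_tailE (mun n) r)) cutoff_tailE.
by apply: cvgB; [exact: cvg_cst|exact: hw (Cc_cutoff s r0)].
Qed.

Lemma Rfourier_cvg t xi : trig_kernel t ->
  (fun n => Rfourier t (mun n) xi) @ \oo --> Rfourier t mu xi.
Proof.
move=> ht; have [r r0 tail0] := cutoff_tail_eq0 hmu.
pose A nu := Rintegral nu setT (fun x : Rs R s => plane_wave t xi x * cutoff r x).
have RA : Rfourier t mu xi = A mu.
  apply/eqP; rewrite -subr_eq0 -normr_le0 -tail0; exact: Rfourier_cutoff_dist_le.
apply/cvgrPdist_le => e e0; have e2 : 0 < e / 2 by rewrite divr_gt0.
move/cvgr_dist_le: (hw (Cc_mul_cutoff r0 (continuous_plane_wave ht (xi := xi)))).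
move=> /(_ _ e2) nearA; move/cvgr_dist_le: (cutoff_tail_cvg r0) => /(_ _ e2).
apply: filterS2 nearA => n hA htail; rewrite RA (splitr e).
apply: le_trans (ler_distD (A (mun n)) _ _) _; rewrite /A lerD // distrC.
apply: le_trans (Rfourier_cutoff_dist_le ht _ xi r) _.
by move: htail; rewrite tail0 sub0r normrN; apply: le_trans; exact: ler_norm.
Qed.

Lemma Rfourier_cvg_unif t (C : set 'rV[R]_s) d :
  trig_kernel t -> compact C -> 0 < d -> \forall n \near \oo, forall q, C q ->
    `|Rfourier t (mun n) q - Rfourier t mu q| <= d.
Proof.
move=> ht cC; have [r r0 tail0] := cutoff_tail_eq0 hmu.
apply: (equilipschitz_cvg_unif (e := fun n => 2 * cutoff_tail (mun n) r) cC
  (wave_const_ge0 s r0)).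
- by move=> q; exact: Rfourier_cvg.
- by move=> n a b; exact: Rfourier_dist_le.
- by move=> a b; have := Rfourier_dist_le ht mu a b r0; rewrite tail0 mulr0 addr0.
- by rewrite -(mulr0 2) -tail0; apply: cvgMr; exact: cutoff_tail_cvg.
Qed.

Lemma fourierE (nu : probability (Rs R s) R) xi :
  fourier nu xi = (Rfourier cos nu xi +i* Rfourier sin nu xi)%C.
Proof. by []. Qed.

Lemma normc_le_add (a b : R) : `|(a +i* b)%C| <= ((`|a| + `|b|)%:C)%C.
Proof.
rewrite normc_def /= lecR.
rewrite -(@ger0_norm _ (`|a| + `|b|)) ?addr_ge0 // -sqrtr_sqr ler_sqrt //.
rewrite sqrrD !real_normK ?num_real //.
have := mulr_ge0 (normr_ge0 a) (normr_ge0 b); rewrite -mulr_natr; lra.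
Qed.

Lemma fourier_cvg_unif (C : set 'rV[R]_s) d : compact C -> 0 < d ->
  \forall n \near \oo, forall q, C q ->
    (`|fourier (mun n) q - fourier mu q| <= d%:C)%C.
Proof.
move=> cC d0; have d2 : 0 < d / 2 by rewrite divr_gt0.
apply: filterS2 (Rfourier_cvg_unif (@trig_kernel_cos R) cC d2)
  (Rfourier_cvg_unif (@trig_kernel_sin R) cC d2) => n hcos hsin q Cq.
rewrite !fourierE; apply: le_trans (normc_le_add _ _) _.
by rewrite lecR (splitr d) lerD ?hcos ?hsin.
Qed.

Lemma fourier_lipschitz : exists2 L : R, 0 <= L & forall a b,
  (`|fourier mu a - fourier mu b| <= (L * `|a - b|)%:C)%C.
Proof.
have [r r0 tail0] := cutoff_tail_eq0 hmu.
exists (2 * (2 * pi * s%:R * (r + 1))) => [|a b].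
  by rewrite mulr_ge0 ?wave_const_ge0.
rewrite !fourierE; apply: le_trans (normc_le_add _ _) _.
rewrite lecR -mulrA mulr_natl mulr2n lerD //.
  by have := Rfourier_dist_le (@trig_kernel_cos R) mu a b r0; rewrite tail0 mulr0 addr0.
by have := Rfourier_dist_le (@trig_kernel_sin R) mu a b r0; rewrite tail0 mulr0 addr0.
Qed.

End WeakConvergence.

Section LowerBounds.
Variable R : realType.

Lemma lipschitz_lower_bound_near (V : normedModType R) (f : V -> R[i]) L p :
  0 <= L -> (forall a b, (`|f a - f b| <= (L * `|a - b|)%:C)%C) -> f p != 0 ->
  exists2 c : R, 0 < c & forall q, ball p c q -> (c%:C <= `|f q|)%C.
Proof.
move=> L0 fL fp0; pose c0 := complex.Re `|f p|.
have fpc : `|f p| = c0%:C%C by rewrite /c0 normc_def.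
have c0_gt0 : 0 < c0 by rewrite -ltcR -fpc normr_gt0.
have L1 : 0 < L + 1 by rewrite ltr_pwDr.
pose c := c0 / 2 / (L + 1); have c_gt0 : 0 < c by rewrite !divr_gt0.
have Lc : L * c + c = c0 / 2 by rewrite -[X in _ + X]mul1r -mulrDl mulrC divfK ?gt_eqF.
exists c => // q; rewrite -ball_normE /= => pq.
apply: le_trans (_ : ((c0 - L * c)%:C <= _)%C); first by rewrite lecR; lra.
rewrite rmorphB /= -fpc lerBlDl.
apply: le_trans (_ : `|f p - f q| + `|f q| <= _).
  by rewrite -{1}(subrK (f q) (f p)) ler_normD.
rewrite lerD2r; apply: le_trans (fL p q) _.
by rewrite lecR ler_wpM2l // ltW.
Qed.

Variable s : nat.

Lemma compact_shift_lower_bound (f : 'rV[R]_s -> R[i]) L (K : set 'rV[R]_s) :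
  compact K -> 0 <= L -> (forall a b, (`|f a - f b| <= (L * `|a - b|)%:C)%C) ->
  (forall p, K p -> exists k, f (p + intvec R k) != 0) ->
  exists e M : R, 0 < e /\ forall xi, K xi ->
    exists k, `|intvec R k| <= M /\ (e%:C <= `|f (xi + intvec R k)|)%C.
Proof.
move=> cK L0 fL fK.
(* [(p, k, c)] is a ball of radius [c] around [p] on which [c] also bounds
   [|f (. + k)|] from below. *)
pose D := [set pkc : 'rV[R]_s * 'rV[int]_s * R | 0 < pkc.2 /\
  forall q, ball pkc.1.1 pkc.2 q -> (pkc.2%:C <= `|f (q + intvec R pkc.1.2)|)%C].
have cov : K `<=` cover D (fun pkc => ball pkc.1.1 pkc.2).
  move=> p Kp; have [k fk] := fK p Kp.
  have fkL (a b : 'rV[R]_s) :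
      (`|f (a + intvec R k) - f (b + intvec R k)| <= (L * `|a - b|)%:C)%C.
    by have := fL (a + intvec R k) (b + intvec R k); rewrite [b + _]addrC addrKA.
  have [c c0 hc] := lipschitz_lower_bound_near L0 fkL fk.
  by exists (p, k, c); [split|exact: ballxx].
move: cK; rewrite compact_cover => /(_ _ D _ (fun i _ => ball_open _ _) cov).
case=> D' D'D KD'.
pose e := \big[Num.min/1]_(i <- finmap.enum_fset D') i.2.
pose M := \big[Num.max/0]_(i <- finmap.enum_fset D') `|intvec R i.1.2|.
exists e, M; split.
  rewrite /e big_seq; apply: lt_bigmin => // i iD.
  by have [] : D i by have := D'D _ iD; rewrite inE.
move=> xi Kxi; have [[[p k] c] pD' xip] := KD' xi Kxi.
have [_ hc] : D (p, k, c) by have := D'D _ pD'; rewrite inE.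
exists k; split; first by rewrite /M; apply: le_bigmax_seq pD' _.
by apply: le_trans (hc xi xip); rewrite lecR /e; apply: ge_bigmin_seq pD' _.
Qed.

End LowerBounds.

Section UnitCube.
Variables (R : realType) (s : nat).

Lemma intvecB (k j : 'rV[int]_s) : intvec R (k - j) = intvec R k - intvec R j.
Proof. by apply/rowP => i; rewrite !mxE intrB. Qed.

Lemma unit_cube_norm_le1 (xi : 'rV[R]_s) : unit_cube xi -> `|xi| <= 1.
Proof.
move=> cxi; rewrite [leLHS]/Num.Def.normr /= mx_normrE.
apply: bigmax_le => // -[i j] _ /=; rewrite (ord1 i).
by have /andP[xi0 xi1] := cxi j; rewrite ger0_norm // ltW.
Qed.

Lemma unit_cube_floor (p : 'rV[R]_s) :
  unit_cube (p - intvec R (map_mx (fun x => Num.floor x) p)).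
Proof.
move=> i; rewrite !mxE subr_ge0 floor_le /= ltrBlDl.
by rewrite -[_ + 1]/((Num.floor (p ord0 i))%:~R + 1%:~R) -intrD -floor_lt_int ltrDl.
Qed.

Lemma Zset_eq0 (nu : probability (Rs R s) R) :
  (forall xi, unit_cube xi -> exists k, fourier nu (xi + intvec R k) != 0) ->
  Zset nu = set0.
Proof.
move=> nz; apply/seteqP; split => // xi [cxi xi0].
by have [k] := nz xi cxi; rewrite xi0 eqxx.
Qed.

Lemma Zset_eq0_shift_neq0 (nu : probability (Rs R s) R) : Zset nu = set0 ->
  forall p, exists k, fourier nu (p + intvec R k) != 0.
Proof.
move=> Z0 p; pose J : 'rV[int]_s := map_mx (fun x => Num.floor x) p.
suff [k fk] : exists k, fourier nu (p - intvec R J + intvec R k) != 0.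
  by exists (k - J); rewrite intvecB addrA addrAC.
apply: contrapT => /forallNP nz.
have : Zset nu (p - intvec R J).
  by split=> [|k]; [exact: unit_cube_floor|apply/eqP/negPn/negP; exact: nz].
by rewrite Z0.
Qed.

End UnitCube.

Section ZeroSet.
Variables (R : realType) (s : nat).
Variables (mun : nat -> probability (Rs R s) R) (mu : probability (Rs R s) R).
Hypothesis hmu : compact_support mu.
Hypothesis hw : weak_cvg mun mu.

Lemma shift_lower_bound_near : Zset mu = set0 ->
  exists e M : R, 0 < e /\ \forall n \near \oo, forall xi, unit_cube xi ->
    exists k, `|intvec R k| <= M /\ (e%:C <= `|fourier (mun n) (xi + intvec R k)|)%C.
Proof.
move=> Z0; have [L L0 fL] := fourier_lipschitz hmu.
pose Q := [set v : 'rV[R]_s | forall i, (fun=> `[(0 : R), 1]%classic) i (v ord0 i)].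
have cQ : compact Q by apply: rV_compact => _; exact: segment_compact.
have [e [M [e0 hM]]] :=
  compact_shift_lower_bound cQ L0 fL (fun p _ => Zset_eq0_shift_neq0 Z0 p).
have e2 : 0 < e / 2 by rewrite divr_gt0.
have cC : compact [set q : 'rV[R]_s | `|q| <= `|M| + 2].
  by apply: compact_norm_le; rewrite ltr_pwDr.
exists (e / 2), M; split => //.
apply: filterS (fourier_cvg_unif hmu hw cC e2) => n hn xi cxi.
have Qxi : Q xi by move=> i; have /andP[xi0 xi1] := cxi i; rewrite /= in_itv /= xi0 ltW.
have [k [kM hk]] := hM xi Qxi; exists k; split => //.
have xik : `|xi + intvec R k| <= `|M| + 2.
  apply: le_trans (ler_normD _ _) _; rewrite addrC lerD //.
    exact: le_trans kM (ler_norm M).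
  by apply: le_trans (unit_cube_norm_le1 cxi) _; rewrite ler1n.
apply: le_trans (_ : ((e - e / 2)%:C <= _)%C); first by rewrite lecR; lra.
rewrite rmorphB /= lerBlDl; apply: le_trans hk _.
rewrite -lerBlDr; apply: le_trans (lerB_dist _ _) _.
by rewrite distrC; exact: hn.
Qed.

Lemma Zset_eq0_of_shift_lower_bound (e M : R) : 0 < e ->
  (\forall n \near \oo, forall xi, unit_cube xi -> exists k, `|intvec R k| <= M /\
     (e%:C <= `|fourier (mun n) (xi + intvec R k)|)%C) ->
  Zset mu = set0.
Proof.
move=> e0 hb; apply/seteqP; split => // xi [cxi xi0].
have e2 : 0 < e / 2 by rewrite divr_gt0.
have cC : compact [set q : 'rV[R]_s | `|q| <= `|xi| + `|M| + 1].
  by apply: compact_norm_le; rewrite ltr_pwDr // addr_ge0.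
have [n [/(_ xi cxi) [k [kM hk]] hn]] :=
  filter_ex (filterS2 _ (fun _ => @conj _ _) hb (fourier_cvg_unif hmu hw cC e2)).
have xik : `|xi + intvec R k| <= `|xi| + `|M| + 1.
  apply: le_trans (ler_normD _ _) _; rewrite -addrA lerD2l.
  by apply: le_trans kM _; apply: le_trans (ler_norm M) _; rewrite lerDl.
by have := hn _ xik; rewrite xi0 subr0 => /(le_trans hk); rewrite lecR; lra.
Qed.

End ZeroSet.

Unset Implicit Arguments.

Theorem theorem3p8 (R : realType) (s : nat)
  (mun : nat -> probability (Rs R s) R) (mu : probability (Rs R s) R) :
  (forall n, compact_support (mun n)) -> compact_support mu ->
  weak_cvg mun mu ->
  (Zset mu = set0 <->
   exists (eps : R) (N : nat), 0 < eps /\ (0 < N)%N /\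
     (forall n, (N <= n)%N -> Zset (mun n) = set0) /\
     exists M : R, forall n, (N <= n)%N -> forall xi, @unit_cube R s xi ->
       exists k : 'rV[int]_s,
         `|@intvec R s k| <= M /\ (eps%:C)%C <= `|fourier (mun n) (xi + @intvec R s k)|).
Proof.
move=> _ hmu hw; split => [Z0|[e [N [e0 [_ [_ [M hb]]]]]]]; last first.
  by apply: (Zset_eq0_of_shift_lower_bound hmu hw (M := M) e0); exists N.
have [e [M [e0 [N _ hN]]]] := shift_lower_bound_near hmu hw Z0.
have bound n : (N < n)%N -> forall xi, unit_cube xi -> exists k, `|intvec R k| <= M /\
    (e%:C <= `|fourier (mun n) (xi + intvec R k)|)%C.
  by move=> /ltnW; exact: hN.
exists e, N.+1; do 2!split => //; split; last by exists M.
move=> n nN; apply: Zset_eq0 => xi cxi; have [k [_ hk]] := bound n nN xi cxi.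
by exists k; rewrite -normr_gt0 (lt_le_trans _ hk) // ltcR.
Qed.
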